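(* Let $\mathcal{H}$ be a Hilbert space of dimension $d$. Consider the two-sample quantum universal hypothesis testing problem: for unknown $\rho,\sigma\in\mathcal{D}(\mathcal{H})$ one is given $\sigma^{\otimes m}\otimes\rho^{\otimes n}$ and must test $H_0:\sigma=\rho$ against $H_1:\sigma\neq\rho$. Let $\alpha\in(0,1)$, $k=\min\{m,n\}$, and let $m,n\to\infty$ at the same rate (i.e. along pairs with $m/n$ and $n/m$ bounded). Then there exist decision rules $M$ (depending only on $m,n,\alpha,d$), using only independent measurements, such that for all sufficiently large $m,n$: whenever $\sigma=\rho$ (for any $\rho\in\mathcal{D}(\mathcal{H})$) the probability of declaring $H_1$ is at most $\alpha$; and for every fixed pair $\rho\neq\sigma$ there is a constant $K$ such that, for all sufficiently large $m,n$, the probability $\beta$ of declaring $H_0$ satisfies $$\beta\le\exp\!\left(-\frac{k\|\rho-\sigma\|_1^2}{344\,d^3}+K k^{1/2}\right).$$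
   Context: $\mathcal{D}(\mathcal{H})$ denotes the set of density operators on $\mathcal{H}$. A decision rule is a two-outcome POVM $\{E_0,E_1\}$ on $\mathcal{H}^{\otimes(m+n)}$ (outcome $0$: declare $H_0$; outcome $1$: declare $H_1$), not depending on the unknown states. ''Independent measurements'' means each of the $m+n$ copies is measured separately and the outcomes are classically processed. The probability of declaring $H_0$ is $\mathrm{Tr}[(\sigma^{\otimes m}\otimes\rho^{\otimes n})E_0]$. $\|X\|_1=\mathrm{Tr}\sqrt{X^\dagger X}$ is the trace norm. *)

From HB Require Import structures.
From mathcomp Require Import all_boot all_order all_algebra.
From mathcomp Require Import complex.
From mathcomp Require Import boolp classical_sets reals.
From mathcomp Require Import sequences exp.
Set Implicit Arguments. Unset Strict Implicit. Unset Printing Implicit Defensive.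
Import Order.TTheory GRing.Theory Num.Theory.
Local Open Scope ring_scope.

Section QDefs.
Variable R : realType.
Local Notation C := (R[i]).

Definition adjm (m n : nat) (X : 'M[C]_(m, n)) : 'M[C]_(n, m) :=
  (map_mx Num.conj X)^T.

Definition psd (d : nat) (A : 'M[C]_d) : Prop :=
  forall v : 'cV[C]_d, 0 <= (adjm v *m A *m v) 0 0.

Definition density (d : nat) (A : 'M[C]_d) : Prop := psd A /\ \tr A = 1.

(* trace norm ||X||_1 = Tr sqrt(X^dagger X), sqrt = the (unique) psd square root *)
Definition trnorm (d : nat) (X : 'M[C]_d) : R :=
  complex.Re (\tr (xget 0 [set S : 'M[C]_d | psd S /\ S *m S = adjm X *m X])).

(* Operators on H^{(x) N}, H = C^d, in the product computational basis
   indexed by words x : 'I_N -> 'I_d. *)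
Definition word (N d : nat) := {ffun 'I_N -> 'I_d}.
Definition op (N d : nat) := word N d -> word N d -> C.

Definition tensop (N d : nat) (A : 'I_N -> 'M[C]_d) : op N d :=
  fun x y => \prod_(i < N) A i (x i) (y i).

Definition idop (N d : nat) : op N d := fun x y => (x == y)%:R.

Definition trprod (N d : nat) (X E : op N d) : C :=
  \sum_(x : word N d) \sum_(y : word N d) X x y * E y x.

Definition two_sample (m n d : nat) (sigma rho : 'M[C]_d) : op (m + n) d :=
  tensop (fun i : 'I_(m + n) => if (i < m)%N then sigma else rho).

(* A decision rule using only independent (non-adaptive) measurements:
   copy i is measured with the POVM (meas i o)_{o in outcome}, and the
   outcome word o is classically (possibly randomly) processed: H_0 is
   declared with probability proc o. *)
Record indep_rule (d N : nat) := IndepRule {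
  outcome : finType;
  meas : 'I_N -> outcome -> 'M[C]_d;
  proc : {ffun 'I_N -> outcome} -> R }.
Arguments outcome {d N} _.
Arguments meas {d N} _ _ _.
Arguments proc {d N} _ _.

Definition valid_rule (d N : nat) (M : indep_rule d N) : Prop :=
  (forall i o, psd (meas M i o)) /\
  (forall i, \sum_(o : outcome M) meas M i o = 1%:M) /\
  (forall w, 0 <= proc M w <= 1).

Definition E0 (d N : nat) (M : indep_rule d N) : op N d :=
  fun x y => \sum_(w : {ffun 'I_N -> outcome M})
               ((proc M w)%:C)%C * \prod_(i < N) meas M i (w i) (x i) (y i).
Definition E1 (d N : nat) (M : indep_rule d N) : op N d :=
  fun x y => idop x y - E0 M x y.

Definition prob_H0 (d m n : nat) (M : indep_rule d (m + n)) (sigma rho : 'M[C]_d) : R :=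
  complex.Re (trprod (@two_sample m n d sigma rho) (E0 M)).
Definition prob_H1 (d m n : nat) (M : indep_rule d (m + n)) (sigma rho : 'M[C]_d) : R :=
  complex.Re (trprod (@two_sample m n d sigma rho) (E1 M)).

End QDefs.

From HB Require Import structures.
From mathcomp Require Import all_boot all_order all_algebra.
From mathcomp Require Import complex.
From mathcomp Require Import boolp classical_sets reals.
From mathcomp Require Import sequences exp.
From mathcomp Require Import ring lra.
Import Order.TTheory GRing.Theory Num.Theory.
Local Open Scope ring_scope.
Set Implicit Arguments. Unset Strict Implicit. Unset Printing Implicit Defensive.

(* Every copy is measured with one fixed POVM, whose elements are the projectors onto
   e_a + phi e_b (phi in {1, -1, i, -i}) scaled by 1/(8d); its outcome statistics see every
   entry of a density matrix.  For each of the finitely many sign functions g on outcomes,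
   the statistic adds g over the first k = min(m, n) sigma-copies and subtracts it over the
   first k rho-copies, and H_1 is declared as soon as one statistic reaches c sqrt(k).
   Under H_0 every statistic is centred, so a Chernoff bound and a union bound over the
   2^|outcomes| sign functions give level alpha when c^2 = 16 2^|outcomes| / alpha.
   Under H_1 the sign function of p_sigma - p_rho has mean k mu, with mu the l1 distance of
   the outcome distributions, and the Chernoff bound gives exp (- k mu^2 / 16 + O(sqrt k)).
   Finally ||rho - sigma||_1^2 <= d ||rho - sigma||_F^2 <= 4 d^3 mu^2, by Cauchy-Schwarz
   on the trace of the square root and by reading the entries off the outcome statistics. *)

Section ProductProbability.
Variable R : realType.

Lemma expR_le_quad (y : R) : y <= 1/2 -> expR y <= 1 + y + 2 * y ^+ 2.
Proof.
move=> hy.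
have hNy : 1 - y <= expR (- y) by rewrite expR_ge1Dx.
have hq : 1 <= (1 - y) * (1 + y + 2 * y ^+ 2).
  have -> : (1 - y) * (1 + y + 2 * y ^+ 2) = 1 + y ^+ 2 * (1 - 2 * y) by ring.
  by rewrite lerDl mulr_ge0 ?sqr_ge0 //; lra.
have hq0 : 0 <= 1 + y + 2 * y ^+ 2 by nra.
rewrite -[expR y]mulr1; apply: (le_trans (ler_wpM2l (expR_ge0 y) hq)).
rewrite mulrA -[X in _ <= X]mul1r ler_wpM2r //.
by rewrite -[X in _ <= X](expRxMexpNx_1 y) ler_pM2l ?expR_gt0.
Qed.

Variable O : finType.

Lemma mgf_le (p f : O -> R) (lam : R) :
  (forall o, 0 <= p o) -> \sum_o p o = 1 -> (forall o, lam * f o <= 1/2) ->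
  \sum_o p o * expR (lam * f o) <=
  expR (lam * \sum_o p o * f o + 2 * lam ^+ 2 * \sum_o p o * f o ^+ 2).
Proof.
move=> p_ge0 p_sum1 lamf_small.
apply: le_trans (expR_ge1Dx _).
apply: (@le_trans _ _ (\sum_o p o * (1 + lam * f o + 2 * (lam * f o) ^+ 2))).
  by apply: ler_sum => o _; rewrite ler_wpM2l ?expR_le_quad.
rewrite (eq_bigr (fun o => p o + lam * (p o * f o) + 2 * lam ^+ 2 * (p o * f o ^+ 2)));
  last by move=> o _; ring.
by rewrite !big_split /= -!big_distrr /= p_sum1 addrA.
Qed.

Definition prob N (p : 'I_N -> O -> R) (E : pred {ffun 'I_N -> O}) : R :=
  \sum_(w | E w) \prod_i p i (w i).

Variables (N : nat) (p : 'I_N -> O -> R).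
Hypothesis p_ge0 : forall i o, 0 <= p i o.

Lemma subset_le_prob (E F : pred {ffun 'I_N -> O}) : {subset E <= F} -> prob p E <= prob p F.
Proof.
move=> sEF; rewrite [X in _ <= X](bigID E) /=.
rewrite [X in _ <= X + _](eq_bigl E) ?lerDl; last first.
  by move=> w /=; case Ew: (E w); rewrite ?andbF ?andbT //; apply: sEF.
by apply: sumr_ge0 => w _; apply: prodr_ge0.
Qed.

Lemma prob_predC E : (forall i, \sum_o p i o = 1) -> prob p (predC E) = 1 - prob p E.
Proof.
move=> p_sum1.
have <- : \sum_(w : {ffun 'I_N -> O}) \prod_i p i (w i) = 1 by rewrite -bigA_distr_bigA big1.
by rewrite (bigID E) /= addrC addrK.
Qed.

Lemma prob_exists_le_sum (G : finType) (E : G -> pred {ffun 'I_N -> O}) :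
  prob p (fun w => [exists g, E g w]) <= \sum_g prob p (E g).
Proof.
rewrite /prob (exchange_big_dep (fun w => [exists g, E g w])) /=; last first.
  by move=> g w _ Egw; apply/existsP; exists g.
apply: ler_sum => w /existsP[g Egw].
rewrite (bigD1 g) //= lerDl.
by apply: sumr_ge0 => h _; apply: prodr_ge0.
Qed.

Lemma chernoff_tail (f : 'I_N -> O -> R) (lam a : R) :
  (forall i, \sum_o p i o = 1) -> 0 <= lam -> (forall i o, lam * f i o <= 1/2) ->
  prob p (fun w => a <= \sum_i f i (w i)) <=
  expR (- (lam * a) + (lam * \sum_i \sum_o p i o * f i o +
                       2 * lam ^+ 2 * \sum_i \sum_o p i o * f i o ^+ 2)).
Proof.
move=> p_sum1 lam_ge0 lamf_small.
pose q i o := p i o * expR (lam * f i o).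
have q_ge0 i o : 0 <= q i o by rewrite mulr_ge0 ?expR_ge0.
have markov : prob p (fun w => a <= \sum_i f i (w i)) <=
    expR (- (lam * a)) * \sum_(w : {ffun 'I_N -> O}) \prod_i q i (w i).
  rewrite mulr_sumr [X in _ <= X](bigID (fun w : {ffun 'I_N -> O} => a <= \sum_i f i (w i))) /=.
  rewrite -[X in X <= _]addr0; apply: lerD; last first.
    by apply: sumr_ge0 => w _; rewrite mulr_ge0 ?expR_ge0 ?prodr_ge0.
  apply: ler_sum => w ha.
  rewrite big_split /= -expR_sum mulrCA -[X in X <= _]mulr1.
  apply: ler_wpM2l; first exact: prodr_ge0.
  rewrite -expRD -[X in X <= _]expR0 ler_expR -big_distrr /= -mulrN -mulrDr.
  by rewrite addrC mulr_ge0 ?subr_ge0.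
apply: le_trans markov _; rewrite expRD ler_wpM2l ?expR_ge0 //.
rewrite -bigA_distr_bigA /=.
have -> : lam * \sum_i \sum_o p i o * f i o + 2 * lam ^+ 2 * \sum_i \sum_o p i o * f i o ^+ 2
  = \sum_i (lam * \sum_o p i o * f i o + 2 * lam ^+ 2 * \sum_o p i o * f i o ^+ 2).
  by rewrite big_split /= -!big_distrr.
rewrite expR_sum; apply: ler_prod => i _.
by rewrite sumr_ge0 ?mgf_le.
Qed.

End ProductProbability.

(* Real and imaginary parts as elements of R (Num.Theory's 'Re stays in R[i]). *)
Local Notation Re := complex.Re.
Local Notation Im := complex.Im.

Section ComplexParts.
Variable R : realType.
Implicit Types x y : R[i].

Lemma Re_mul x y : Re (x * y) = Re x * Re y - Im x * Im y. Proof. by case: x; case: y. Qed.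
Lemma Im_mul x y : Im (x * y) = Re x * Im y + Im x * Re y. Proof. by case: x; case: y. Qed.
Lemma Re_conj x : Re (Num.conj x) = Re x. Proof. by case: x. Qed.
Lemma Im_conj x : Im (Num.conj x) = - Im x. Proof. by case: x. Qed.

Lemma complex_ext x y : Re x = Re y -> Im x = Im y -> x = y.
Proof. by move=> eRe eIm; apply/eqP; rewrite eq_complex eRe eIm !eqxx. Qed.

Lemma ge0_complex x : 0 <= x -> Im x = 0 /\ 0 <= Re x.
Proof. by rewrite lecE /= => /andP[/eqP -> ->]. Qed.

End ComplexParts.

Section PsdMatrices.
Variable R : realType.
Local Notation C := R[i].

Lemma adjmM m n p (A : 'M[C]_(m, n)) (B : 'M[C]_(n, p)) :
  adjm (A *m B) = adjm B *m adjm A.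
Proof. by rewrite /adjm map_mxM trmx_mul. Qed.

Lemma adjmK m n (A : 'M[C]_(m, n)) : adjm (adjm A) = A.
Proof. by apply/matrixP => i j; rewrite !mxE conjCK. Qed.

Variable d : nat.

Definition pairvec (a b : 'I_d) (phi : C) : 'cV[C]_d :=
  \col_x ((x == a)%:R + phi * (x == b)%:R).

Lemma sum_delta (F : 'I_d -> C) a : \sum_x (x == a)%:R * F x = F a.
Proof. by rewrite (bigD1 a) //= eqxx mul1r big1 ?addr0 // => x /negbTE ->; rewrite mul0r. Qed.

Lemma sum_pairvec (F : 'I_d -> C) a b phi :
  \sum_x ((x == a)%:R + phi * (x == b)%:R) * F x = F a + phi * F b.
Proof.
under eq_bigr do rewrite mulrDl -mulrA.
by rewrite big_split -mulr_sumr /= !sum_delta.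
Qed.

Lemma quad_pairvec (A : 'M[C]_d) a b phi :
  (adjm (pairvec a b phi) *m A *m pairvec a b phi) 0 0 =
  A a a + phi * A a b + Num.conj phi * A b a + Num.conj phi * phi * A b b.
Proof.
rewrite mxE.
under eq_bigr => y _.
  rewrite !mxE.
  under eq_bigr do rewrite !mxE rmorphD rmorphM /= !conjC_nat.
  rewrite sum_pairvec mulrC.
  over.
rewrite /= sum_pairvec; ring.
Qed.

Lemma psd_hermitian (A : 'M[C]_d) : psd A -> forall a b, A b a = Num.conj (A a b).
Proof.
move=> psdA a b.
have [Im_aa _] := ge0_complex (psdA (pairvec a a 0)).
have [Im_bb _] := ge0_complex (psdA (pairvec b b 0)).
have [Im_sum _] := ge0_complex (psdA (pairvec a b 1)).
have [Im_isum _] := ge0_complex (psdA (pairvec a b 'i%C)).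
move: Im_aa Im_bb Im_sum Im_isum; rewrite !quad_pairvec !raddfD /= !Im_mul /=.
move=> *; apply: complex_ext; rewrite ?Re_conj ?Im_conj; lra.
Qed.

End PsdMatrices.

Section PairPOVM.
Variables (R : realType) (d : nat).
Local Notation C := R[i].
Local Open Scope complex_scope.

Definition phase (k : 'I_4) : C :=
  match val k with 0 => 1 | 1 => -1 | 2 => 'i%C | _ => - 'i%C end.

Lemma mul_conj_phase k : Num.conj (phase k) * phase k = 1.
Proof.
by case: k => [[|[|[|[|k]]]] lt_k4] //=; apply: complex_ext; rewrite /= ?Re_mul ?Im_mul /=; lra.
Qed.

Lemma sum_phase (al be al' be' : C) :
  \sum_k (al + phase k * be) * (al' + Num.conj (phase k) * be') = 4%:R * (al * al' + be * be').
Proof.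
rewrite !big_ord_recl big_ord0 /phase /=.
case: al al' be be' => [x1 y1] [x2 y2] [x3 y3] [x4 y4].
apply: complex_ext => /=; ring.
Qed.

Definition pair_outcome := ('I_d * 'I_d * 'I_4)%type.

Lemma sum_pair_outcome (V : nmodType) (G : pair_outcome -> V) :
  \sum_o G o = \sum_a \sum_b \sum_k G (a, b, k).
Proof.
rewrite pair_bigA /= pair_bigA; apply: eq_bigr => -[[a b] k] _ //.
Qed.

Definition povm_scale : R := (8 * d)%:R^-1.

(* Summing over the four phases cancels the cross terms of |e_a + phi e_b><e_a + phi e_b|,
   which is why these elements add up to the identity (sum_pair_povm). *)
Definition pair_povm (o : pair_outcome) : 'M[C]_d :=
  let v := pairvec o.1.1 o.1.2 (phase o.2) in povm_scale%:C *: (v *m adjm v).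

Lemma pair_povm_psd o : psd (pair_povm o).
Proof.
move=> u; rewrite /pair_povm /=; set v := pairvec _ _ _; set w := adjm u *m v.
have -> : adjm u *m pair_povm o *m u = povm_scale%:C *: (w *m adjm w).
  by rewrite adjmM adjmK -scalemxAr -scalemxAl !mulmxA.
rewrite !mxE big_ord1 !mxE mulr_ge0 ?mul_conjC_ge0 //.
by rewrite ler0c invr_ge0 ler0n.
Qed.

Lemma sum_pair_povm : (0 < d)%N -> \sum_o pair_povm o = 1%:M.
Proof.
move=> d_gt0; apply/matrixP => x y; rewrite summxE sum_pair_outcome [RHS]mxE.
have sum_k a b : \sum_k pair_povm (a, b, k) x y =
    povm_scale%:C * (4%:R * ((x == a)%:R * (y == a)%:R + (x == b)%:R * (y == b)%:R)).
  rewrite -sum_phase mulr_sumr; apply: eq_bigr => k _.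
  by rewrite !mxE big_ord1 !mxE rmorphD rmorphM /= !conjC_nat.
under eq_bigr do under eq_bigr do rewrite sum_k.
under eq_bigr do rewrite -big_distrr /=; rewrite -big_distrr /=.
under eq_bigr do rewrite -big_distrr /=; rewrite -big_distrr /=.
under eq_bigr do rewrite big_split /= sumr_const card_ord.
rewrite big_split /= sumr_const card_ord sumrMnl.
under eq_bigr do rewrite [x == _]eq_sym; rewrite sum_delta eq_sym.
rewrite /povm_scale fmorphV rmorph_nat -mulr2n -mulrnA -mulr_natr natrM.
have d_neq0 : (d%:R : C) != 0 by rewrite pnatr_eq0 -lt0n.
by field.
Qed.
Definition outcome_prob (A : 'M[C]_d) (o : pair_outcome) : R := Re (\tr (A *m pair_povm o)).

Lemma tr_pair_povm (A : 'M[C]_d) o :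
  let v := pairvec o.1.1 o.1.2 (phase o.2) in
  \tr (A *m pair_povm o) = povm_scale%:C * (adjm v *m A *m v) 0 0.
Proof. by rewrite /pair_povm /= -scalemxAr mxtraceZ mulmxA mxtrace_mulC mulmxA trace_mx11. Qed.

Lemma tr_pair_povm_ge0 (A : 'M[C]_d) o : psd A -> 0 <= \tr (A *m pair_povm o).
Proof. by move=> psdA; rewrite tr_pair_povm mulr_ge0 ?psdA // ler0c invr_ge0 ler0n. Qed.

Lemma outcome_probE (A : 'M[C]_d) o : psd A -> (outcome_prob A o)%:C = \tr (A *m pair_povm o).
Proof. by move=> psdA; apply/RRe_real/ger0_real/tr_pair_povm_ge0. Qed.

Lemma outcome_prob_ge0 (A : 'M[C]_d) o : psd A -> 0 <= outcome_prob A o.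
Proof. by move=> psdA; rewrite -ler0c outcome_probE ?tr_pair_povm_ge0. Qed.

Lemma sum_outcome_prob (A : 'M[C]_d) : (0 < d)%N -> \sum_o outcome_prob A o = Re (\tr A).
Proof. by move=> d_gt0; rewrite -raddf_sum -raddf_sum -mulmx_sumr sum_pair_povm // mulmx1. Qed.

Lemma outcome_probB (A B : 'M[C]_d) o :
  outcome_prob (A - B) o = outcome_prob A o - outcome_prob B o.
Proof. by rewrite /outcome_prob mulmxBl !raddfB. Qed.

Lemma outcome_prob_hermitian (D : 'M[C]_d) a b k :
  (forall a b, D b a = Num.conj (D a b)) ->
  outcome_prob D (a, b, k) =
  povm_scale * (Re (D a a) + Re (D b b) + 2 * Re (phase k * D a b)).
Proof.
move=> hermD; rewrite /outcome_prob tr_pair_povm quad_pairvec /= [D b a]hermD -rmorphM.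
rewrite mul_conj_phase mul1r Re_mul /= mul0r subr0 !raddfD /= Re_conj; ring.
Qed.

Lemma density_dim_gt0 (A : 'M[C]_d) : density A -> (0 < d)%N.
Proof. by case: d A => [|//] A [_]; rewrite /mxtrace big_ord0 => /eqP; rewrite eq_sym oner_eq0. Qed.

Lemma sum_outcome_prob_density (A : 'M[C]_d) : density A -> \sum_o outcome_prob A o = 1.
Proof. by move=> densA; rewrite sum_outcome_prob ?(density_dim_gt0 densA) // densA.2. Qed.

Definition entry_norm1 (X : 'M[C]_d) : R :=
  \sum_a \sum_b (`|Re (X a b)| + `|Im (X a b)|).

Lemma ler_norm_addsub2 (u v : R) : 4 * `|v| <= `|u + 2 * v| + `|u - 2 * v|.
Proof.
have diffE : u + 2 * v - (u - 2 * v) = 4 * v by ring.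
by have := ler_normB (u + 2 * v) (u - 2 * v); rewrite diffE normrM ger0_norm.
Qed.

Lemma entry_norm1_le_outcome_dist (D : 'M[C]_d) :
  (forall a b, D b a = Num.conj (D a b)) ->
  4 * povm_scale * entry_norm1 D <= \sum_o `|outcome_prob D o|.
Proof.
move=> hermD; rewrite sum_pair_outcome mulr_sumr; apply: ler_sum => a _.
rewrite mulr_sumr; apply: ler_sum => b _.
rewrite !big_ord_recl big_ord0 addr0 !outcome_prob_hermitian // /phase /=.
set u := Re (D a a) + Re (D b b).
rewrite mul1r mulN1r mulNr !raddfN /= !Re_mul /= !mul0r !mul1r !sub0r opprK.
have c_ge0 : 0 <= povm_scale by rewrite invr_ge0 ler0n.
rewrite !normrM ger0_norm // -!mulrDr -mulrA mulrCA; apply: ler_wpM2l => //.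
have := ler_norm_addsub2 u (Re (D a b)); have := ler_norm_addsub2 u (Im (D a b)).
rewrite !mulrN; lra.
Qed.

End PairPOVM.
Arguments pair_povm {R d} o.

Section TraceNorm.
Variable R : realType.
Local Notation C := R[i].

Lemma sqr_sum_le_card (I : finType) (r : I -> R) :
  (\sum_i r i) ^+ 2 <= #|I|%:R * \sum_i r i ^+ 2.
Proof.
set n : R := #|I|%:R; set S := \sum_i r i; set Q := \sum_i r i ^+ 2.
have sum_const (x : R) : \sum_(i : I) x = n * x by rewrite sumr_const -mulr_natl.
have : 0 <= \sum_i \sum_j (r i - r j) ^+ 2 by do 2 (apply: sumr_ge0 => ? _); exact: sqr_ge0.
have -> : \sum_i \sum_j (r i - r j) ^+ 2 = 2 * (n * Q - S ^+ 2).
  transitivity (\sum_i (n * r i ^+ 2 + Q - 2 * S * r i)).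
    apply: eq_bigr => i _.
    rewrite (eq_bigr (fun j => r i ^+ 2 + r j ^+ 2 - 2 * r i * r j)) => [|j _]; last by ring.
    by rewrite sumrB big_split /= sum_const -!mulr_sumr /S /Q; ring.
  by rewrite sumrB big_split /= sum_const -!mulr_sumr /S /Q; ring.
lra.
Qed.

Lemma sum_sqr_le_sqr_sum (I : finType) (t : I -> R) :
  (forall i, 0 <= t i) -> \sum_i t i ^+ 2 <= (\sum_i t i) ^+ 2.
Proof.
move=> t_ge0.
suff [] : 0 <= \sum_i t i /\ \sum_i t i ^+ 2 <= (\sum_i t i) ^+ 2 by [].
elim/big_rec2: _ => [|i s q _ [s_ge0 q_le]]; first by rewrite expr0n.
have := t_ge0 i; split; [exact: addr_ge0 | nra].
Qed.

Variable d : nat.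

Definition frobenius2 (X : 'M[C]_d) : R := \sum_a \sum_b (Re (X a b) ^+ 2 + Im (X a b) ^+ 2).

Lemma frobenius2E (X : 'M[C]_d) : frobenius2 X = Re (\tr (adjm X *m X)).
Proof.
rewrite /frobenius2 /mxtrace raddf_sum exchange_big /=; apply: eq_bigr => b _.
rewrite mxE raddf_sum; apply: eq_bigr => a _.
by rewrite !mxE /= Re_mul Re_conj Im_conj; ring.
Qed.

Lemma frobenius2_le_entry_norm1 (X : 'M[C]_d) : frobenius2 X <= entry_norm1 X ^+ 2.
Proof.
have entry_le a b : Re (X a b) ^+ 2 + Im (X a b) ^+ 2 <= (`|Re (X a b)| + `|Im (X a b)|) ^+ 2.
  rewrite -(real_normK (num_real (Re (X a b)))) -(real_normK (num_real (Im (X a b)))).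
  by have := normr_ge0 (Re (X a b)); have := normr_ge0 (Im (X a b)); nra.
have norms_ge0 a b : 0 <= `|Re (X a b)| + `|Im (X a b)| by rewrite addr_ge0.
rewrite /frobenius2 /entry_norm1.
apply: le_trans; last by apply: sum_sqr_le_sqr_sum => a; apply: sumr_ge0 => b _.
apply: ler_sum => a _; apply: le_trans; last exact: sum_sqr_le_sqr_sum.
by apply: ler_sum => b _.
Qed.

Lemma psd_trace_sqr_le (S : 'M[C]_d) : psd S -> Re (\tr S) ^+ 2 <= d%:R * Re (\tr (S *m S)).
Proof.
move=> psdS.
have adjmS : adjm S = S by apply/matrixP => a b; rewrite !mxE -psd_hermitian.
rewrite -{2}adjmS -frobenius2E /mxtrace raddf_sum.
apply: le_trans (sqr_sum_le_card _) _; rewrite card_ord ler_wpM2l // ler_sum // => a _.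
rewrite (bigD1 a) //= -[X in X <= _]addr0 lerD ?lerDl ?sqr_ge0 //.
by apply: sumr_ge0 => b _; rewrite addr_ge0 ?sqr_ge0.
Qed.

(* When X^dagger X has no psd square root, trnorm X is the default value 0 of xget. *)
Lemma trnorm_sqr_le (X : 'M[C]_d) : trnorm X ^+ 2 <= d%:R * entry_norm1 X ^+ 2.
Proof.
rewrite /trnorm; set P := (X in xget 0 X).
have [[S PS]|noS] := pselect (exists S, P S); last first.
  rewrite xgetPN => [|S PS]; last by apply: noS; exists S.
  by rewrite mxtrace0 expr0n mulr_ge0 ?sqr_ge0.
have [psdS sqrS] := xgetPex 0 (ex_intro _ S PS).
apply: le_trans (psd_trace_sqr_le psdS) _; rewrite ler_wpM2l // sqrS -frobenius2E.
exact: frobenius2_le_entry_norm1.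
Qed.

End TraceNorm.

Section IndependentRules.
Variables (R : realType) (d : nat).
Local Notation C := R[i].
Local Open Scope complex_scope.

Lemma mxtrace_mul_entries (A B : 'M[C]_d) : \tr (A *m B) = \sum_a \sum_b A a b * B b a.
Proof. by apply: eq_bigr => a _; rewrite mxE. Qed.

Lemma trprod_tensop_E0 N (A : 'I_N -> 'M[C]_d) (M : indep_rule R d N) :
  trprod (tensop A) (E0 M) =
  \sum_w (@proc _ _ _ M w)%:C * \prod_i \tr (A i *m @meas _ _ _ M i (w i)).
Proof.
rewrite /trprod /E0 /tensop.
under eq_bigr do under eq_bigr do rewrite big_distrr /=.
under eq_bigr do rewrite exchange_big /=.
rewrite exchange_big /=; apply: eq_bigr => w _.
under eq_bigr do under eq_bigr do rewrite mulrCA -big_split /=.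
under eq_bigr do rewrite -big_distrr /=.
rewrite -big_distrr /=; congr (_ * _).
under [RHS]eq_bigr do rewrite mxtrace_mul_entries.
rewrite bigA_distr_bigA; apply: eq_bigr => x _.
by rewrite bigA_distr_bigA.
Qed.

Lemma trprod_tensop_idop N (A : 'I_N -> 'M[C]_d) :
  trprod (tensop A) (@idop R N d) = \prod_i \tr (A i).
Proof.
rewrite /trprod /idop /tensop /mxtrace bigA_distr_bigA; apply: eq_bigr => x _.
rewrite (bigD1 x) //= eqxx mulr1 -[RHS]addr0; congr (_ + _).
by apply: big1 => y /negbTE ->; rewrite mulr0.
Qed.

Lemma prob_H1E m n (M : indep_rule R d (m + n)) sigma rho :
  density sigma -> density rho -> prob_H1 M sigma rho = 1 - prob_H0 M sigma rho.
Proof.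
move=> [_ tr_sigma] [_ tr_rho].
rewrite /prob_H1 /prob_H0 /E1 /trprod.
under eq_bigr do under eq_bigr do rewrite mulrBr.
under eq_bigr do rewrite sumrB.
rewrite sumrB raddfB; congr (_ - _).
have := trprod_tensop_idop (fun i : 'I_(m + n) => if (i < m)%N then sigma else rho).
by rewrite /trprod => ->; rewrite big1 // => i _; case: ifP.
Qed.

Definition pair_rule N (accept : pred {ffun 'I_N -> pair_outcome d}) : indep_rule R d N :=
  @IndepRule R d N (pair_outcome d) (fun _ => @pair_povm R d) (fun w => (accept w)%:R).

Lemma pair_rule_valid N (accept : pred {ffun 'I_N -> pair_outcome d}) :
  (0 < d)%N -> valid_rule (pair_rule accept).
Proof.
move=> d_gt0; split; first by move=> i o; exact: pair_povm_psd.
split; first by move=> i; exact: sum_pair_povm.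
by move=> w; rewrite ler0n lern1 leq_b1.
Qed.

Definition copy_state m N (sigma rho : 'M[C]_d) (i : 'I_N) :=
  if (i < m)%N then sigma else rho.

Definition copy_prob m N (sigma rho : 'M[C]_d) (i : 'I_N) : pair_outcome d -> R :=
  outcome_prob (copy_state m sigma rho i).

Lemma copy_prob_ge0 m N sigma rho (i : 'I_N) o :
  psd sigma -> psd rho -> 0 <= copy_prob m sigma rho i o.
Proof. by move=> psd_sigma psd_rho; rewrite outcome_prob_ge0 /copy_state //; case: ifP. Qed.

Lemma sum_copy_prob m N sigma rho (i : 'I_N) :
  density sigma -> density rho -> \sum_o copy_prob m sigma rho i o = 1.
Proof. by rewrite /copy_prob /copy_state; case: ifP => _ *; rewrite sum_outcome_prob_density. Qed.

Lemma prob_H0_pair_rule m n (accept : pred {ffun 'I_(m + n) -> pair_outcome d}) sigma rho :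
  psd sigma -> psd rho ->
  prob_H0 (pair_rule accept) sigma rho = prob (copy_prob m sigma rho) accept.
Proof.
move=> psd_sigma psd_rho.
have copy_probE (i : 'I_(m + n)) o :
    (copy_prob m sigma rho i o)%:C = \tr (copy_state m sigma rho i *m pair_povm o).
  by rewrite outcome_probE /copy_state //; case: ifP.
rewrite /prob_H0 /two_sample trprod_tensop_E0 /prob [RHS]big_mkcond raddf_sum.
apply: eq_bigr => w _.
rewrite -(eq_bigr _ (fun i _ => copy_probE i (w i))) -rmorph_prod -rmorphM /=.
by case: (accept w); rewrite ?mul1r ?mul0r.
Qed.

Lemma prob_H1_pair_rule m n (accept : pred {ffun 'I_(m + n) -> pair_outcome d}) sigma rho :
  density sigma -> density rho ->
  prob_H1 (pair_rule accept) sigma rho = prob (copy_prob m sigma rho) (predC accept).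
Proof.
move=> dens_sigma dens_rho; have [psd_sigma psd_rho] := (dens_sigma.1, dens_rho.1).
rewrite prob_H1E // prob_H0_pair_rule //.
by apply/esym/prob_predC => i; exact: sum_copy_prob.
Qed.

End IndependentRules.
Arguments pair_rule {R d N} accept.

Section TwoSampleTest.
Variables (R : realType) (d : nat).
Local Notation C := R[i].
Local Notation O := (pair_outcome d).

Definition signf (g : {ffun O -> bool}) (o : O) : R := if g o then 1 else -1.

Definition copy_weight m n (i : 'I_(m + n)) : R :=
  match split i with
  | inl j => if (j < minn m n)%N then 1 else 0
  | inr j => if (j < minn m n)%N then -1 else 0
  end.

Definition statistic m n g (w : {ffun 'I_(m + n) -> O}) : R :=
  \sum_i copy_weight i * signf g (w i).

Definition accepts (c : R) m n : pred {ffun 'I_(m + n) -> O} :=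
  fun w => [forall g, statistic g w < c * Num.sqrt (minn m n)%:R].
Arguments accepts c m n : clear implicits.

Definition two_sample_test (c : R) m n : indep_rule R d (m + n) := pair_rule (accepts c m n).
Arguments two_sample_test c m n : clear implicits.

Definition sign_mean (A : 'M[C]_d) g : R := \sum_o outcome_prob A o * signf g o.

Lemma sum_copies_minn m n (h : 'I_(m + n) -> R) (u v : R) :
  (forall j : 'I_m, h (lshift n j) = if (j < minn m n)%N then u else 0) ->
  (forall j : 'I_n, h (rshift m j) = if (j < minn m n)%N then v else 0) ->
  \sum_i h i = (minn m n)%:R * (u + v).
Proof.
move=> h_left h_right; rewrite big_split_ord /=.
under eq_bigr do rewrite h_left; under [X in _ + X]eq_bigr do rewrite h_right.
rewrite -!big_mkcond /= -(big_ord_widen m (fun=> u)) ?geq_minl //.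
rewrite -(big_ord_widen n (fun=> v)) ?geq_minr // !sumr_const !card_ord.
by rewrite -[u *+ _]mulr_natl -[v *+ _]mulr_natl mulrDr.
Qed.

Lemma copy_weight_lshift m n (j : 'I_m) :
  copy_weight (lshift n j) = if (j < minn m n)%N then 1 else 0.
Proof. by rewrite /copy_weight (unsplitK (inl _ j)). Qed.

Lemma copy_weight_rshift m n (j : 'I_n) :
  copy_weight (rshift m j) = if (j < minn m n)%N then -1 else 0.
Proof. by rewrite /copy_weight (unsplitK (inr _ j)). Qed.

Lemma copy_prob_lshift m n (sigma rho : 'M[C]_d) (j : 'I_m) :
  copy_prob m sigma rho (lshift n j) = outcome_prob sigma.
Proof. by rewrite /copy_prob /copy_state /= ltn_ord. Qed.

Lemma copy_prob_rshift m n (sigma rho : 'M[C]_d) (j : 'I_n) :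
  copy_prob m sigma rho (rshift m j) = outcome_prob rho.
Proof. by rewrite /copy_prob /copy_state /= ltnNge leq_addr. Qed.

Lemma statistic_mean m n (sigma rho : 'M[C]_d) g :
  \sum_(i < m + n) \sum_o copy_prob m sigma rho i o * (copy_weight i * signf g o) =
  (minn m n)%:R * (sign_mean sigma g - sign_mean rho g).
Proof.
apply: sum_copies_minn => j; rewrite ?copy_prob_lshift ?copy_weight_lshift
  ?copy_prob_rshift ?copy_weight_rshift; case: ifP => _.
- by apply: eq_bigr => o _; rewrite mul1r.
- by rewrite big1 // => o _; rewrite mul0r mulr0.
- by rewrite /sign_mean -sumrN; apply: eq_bigr => o _; rewrite mulN1r mulrN.
- by rewrite big1 // => o _; rewrite mul0r mulr0.
Qed.

Lemma statistic_second_moment m n (sigma rho : 'M[C]_d) g : density sigma -> density rho ->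
  \sum_(i < m + n) \sum_o copy_prob m sigma rho i o * (copy_weight i * signf g o) ^+ 2 =
  (minn m n)%:R * 2.
Proof.
move=> dens_sigma dens_rho.
have signf_sqr o : signf g o ^+ 2 = 1 by rewrite /signf; case: (g o); rewrite ?sqrrN expr1n.
under eq_bigr do under eq_bigr do rewrite exprMn signf_sqr mulr1.
apply: sum_copies_minn => j; rewrite -mulr_suml ?copy_prob_lshift ?copy_weight_lshift
  ?copy_prob_rshift ?copy_weight_rshift sum_outcome_prob_density //.
all: by case: ifP; rewrite ?sqrrN ?expr1n ?expr0n ?mul1r.
Qed.

Lemma weight_signf_le1 m n (i : 'I_(m + n)) g o : copy_weight i * signf g o <= 1.
Proof.
rewrite /copy_weight /signf; case: (split i) => j; case: ifP => _; case: (g o);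
  rewrite ?mul1r ?mulN1r ?mul0r ?opprK ?lexx ?ler01 //; lra.
Qed.

Lemma statistic_tail m n (sigma rho : 'M[C]_d) g (lam a : R) :
  density sigma -> density rho -> 0 <= lam <= 1/2 ->
  prob (copy_prob m sigma rho)
    (fun w : {ffun 'I_(m + n) -> O} => a <= statistic g w) <=
  expR (- (lam * a) + lam * (minn m n)%:R * (sign_mean sigma g - sign_mean rho g) +
        4 * lam ^+ 2 * (minn m n)%:R).
Proof.
move=> dens_sigma dens_rho /andP[lam_ge0 lam_le].
have p_ge0 (i : 'I_(m + n)) o := copy_prob_ge0 m i o dens_sigma.1 dens_rho.1.
apply: le_trans (chernoff_tail p_ge0 (f := fun i o => copy_weight i * signf g o) a _ lam_ge0 _) _.
- by move=> i; exact: sum_copy_prob.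
- move=> i o; apply: le_trans lam_le.
  by rewrite -[X in _ <= X]mulr1 ler_wpM2l ?weight_signf_le1.
rewrite statistic_mean statistic_second_moment // ler_expR; lra.
Qed.

Definition negf (g : {ffun O -> bool}) : {ffun O -> bool} := [ffun o => ~~ g o].

Lemma signf_negf g o : signf (negf g) o = - signf g o.
Proof. by rewrite /signf ffunE; case: (g o); rewrite ?opprK. Qed.

Lemma statistic_negf m n g (w : {ffun 'I_(m + n) -> O}) : statistic (negf g) w = - statistic g w.
Proof. by rewrite /statistic -sumrN; apply: eq_bigr => i _; rewrite signf_negf mulrN. Qed.

Lemma sign_mean_negf (A : 'M[C]_d) g : sign_mean A (negf g) = - sign_mean A g.
Proof. by rewrite /sign_mean -sumrN; apply: eq_bigr => o _; rewrite signf_negf mulrN. Qed.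

Lemma two_sample_test_type1 (c : R) m n (rho : 'M[C]_d) :
  density rho -> 0 <= c -> (0 < minn m n)%N -> c ^+ 2 <= 16 * (minn m n)%:R ->
  prob_H1 (two_sample_test c m n) rho rho <= #|{ffun O -> bool}|%:R * expR (- (c ^+ 2 / 16)).
Proof.
move=> dens_rho c_ge0 k_gt0 c_small.
pose k := minn m n; pose s : R := Num.sqrt k%:R.
pose lam := c / (8 * s). (* the Chernoff parameter minimizing - lam c s + 4 lam^2 k *)
have s_gt0 : 0 < s by rewrite sqrtr_gt0 ltr0n.
have s_sqr : s ^+ 2 = k%:R by rewrite sqr_sqrtr ?ler0n.
have lam_ge0 : 0 <= lam by rewrite /lam divr_ge0 // mulr_ge0 // ltW.
have lam_le : lam <= 1/2.
  by rewrite /lam ler_pdivrMr ?mulr_gt0 //; move: c_small; rewrite -s_sqr; nra.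
have p_ge0 (i : 'I_(m + n)) o := copy_prob_ge0 m i o dens_rho.1 dens_rho.1.
rewrite prob_H1_pair_rule //.
apply: le_trans (subset_le_prob p_ge0 (F := fun w => [exists g, c * s <= statistic g w]) _) _.
  move=> w; rewrite !inE negb_forall => /existsP[g].
  by rewrite -leNgt => ?; apply/existsP; exists g.
apply: le_trans (prob_exists_le_sum p_ge0 _) _.
rewrite mulr_natl -sumr_const; apply: ler_sum => g _.
apply: le_trans (statistic_tail m n g (c * s) (lam := lam) dens_rho dens_rho _) _.
  by rewrite lam_ge0.
have s_neq0 : s != 0 by rewrite gt_eqF.
rewrite subrr mulr0 addr0.
suff -> : - (lam * (c * s)) + 4 * lam ^+ 2 * k%:R = - (c ^+ 2 / 16) by [].
by rewrite /lam -s_sqr; field.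
Qed.

Definition outcome_dist (sigma rho : 'M[C]_d) : R :=
  \sum_o `|outcome_prob sigma o - outcome_prob rho o|.

Lemma outcome_dist_le2 (sigma rho : 'M[C]_d) :
  density sigma -> density rho -> outcome_dist sigma rho <= 2.
Proof.
move=> dens_sigma dens_rho.
apply: le_trans (_ : \sum_o (outcome_prob sigma o + outcome_prob rho o) <= 2).
  apply: ler_sum => o _; apply: le_trans (ler_normB _ _) _.
  have [psd_sigma psd_rho] := (dens_sigma.1, dens_rho.1).
  by rewrite !ger0_norm // outcome_prob_ge0.
by rewrite big_split /= !sum_outcome_prob_density.
Qed.

Lemma sign_mean_gap (sigma rho : 'M[C]_d) :
  let g := [ffun o => outcome_prob rho o <= outcome_prob sigma o] in
  sign_mean sigma g - sign_mean rho g = outcome_dist sigma rho.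
Proof.
rewrite /sign_mean /outcome_dist -sumrB; apply: eq_bigr => o _.
by rewrite /signf ffunE -mulrBl; case: lerP => _; rewrite ?mulr1 // mulrN1 opprB.
Qed.

Lemma two_sample_test_type2 (c : R) m n (sigma rho : 'M[C]_d) :
  density sigma -> density rho ->
  prob_H0 (two_sample_test c m n) sigma rho <=
  expR (- ((minn m n)%:R * outcome_dist sigma rho ^+ 2 / 16) +
        outcome_dist sigma rho * c / 8 * Num.sqrt (minn m n)%:R).
Proof.
move=> dens_sigma dens_rho.
pose k := minn m n; pose s : R := Num.sqrt k%:R.
pose mu := outcome_dist sigma rho; pose lam := mu / 8. (* minimizes - lam k mu + 4 lam^2 k *)
pose g := [ffun o => outcome_prob rho o <= outcome_prob sigma o].
have lam_ok : 0 <= lam <= 1/2.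
  have mu_ge0 : 0 <= mu by apply: sumr_ge0.
  by have := outcome_dist_le2 dens_sigma dens_rho; rewrite /lam -/mu; lra.
have p_ge0 (i : 'I_(m + n)) o := copy_prob_ge0 m i o dens_sigma.1 dens_rho.1.
have [psd_sigma psd_rho] := (dens_sigma.1, dens_rho.1).
rewrite prob_H0_pair_rule //.
apply: le_trans (subset_le_prob p_ge0 (F := fun w => - (c * s) <= statistic (negf g) w) _) _.
  by move=> w /forallP/(_ g) lt_thr; rewrite unfold_in /= statistic_negf lerN2 ltW.
apply: le_trans (statistic_tail m n (negf g) (- (c * s)) dens_sigma dens_rho lam_ok) _.
rewrite !sign_mean_negf -opprD sign_mean_gap ler_expR -/mu.
suff -> : - (lam * - (c * s)) + lam * k%:R * - mu + 4 * lam ^+ 2 * k%:R =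
  - (k%:R * mu ^+ 2 / 16) + mu * c / 8 * s by [].
by rewrite /lam; field.
Qed.

End TwoSampleTest.

Section LevelAndPower.
Variables (R : realType) (d : nat).
Local Notation C := R[i].

Lemma trnorm_sqr_le_outcome_dist (sigma rho : 'M[C]_d) : density sigma -> density rho ->
  trnorm (rho - sigma) ^+ 2 <= 4 * d%:R ^+ 3 * outcome_dist sigma rho ^+ 2.
Proof.
move=> dens_sigma dens_rho.
have d_gt0 : 0 < d%:R :> R by rewrite ltr0n (density_dim_gt0 dens_rho).
have [psd_sigma psd_rho] := (dens_sigma.1, dens_rho.1).
have herm a b : (rho - sigma) b a = Num.conj ((rho - sigma) a b).
  by rewrite !mxE rmorphB /= -!psd_hermitian.
have := entry_norm1_le_outcome_dist herm.
under eq_bigr do rewrite outcome_probB distrC.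
rewrite -/(outcome_dist sigma rho) /povm_scale natrM => L_le.
have L_ge0 : 0 <= entry_norm1 (rho - sigma) by do 2 (apply: sumr_ge0 => ? _); rewrite addr_ge0.
have L_le_mu : entry_norm1 (rho - sigma) <= 2 * d%:R * outcome_dist sigma rho.
  have scaleE : 4 * (8%:R * d%:R)^-1 * entry_norm1 (rho - sigma) =
      entry_norm1 (rho - sigma) / (2 * d%:R) by field; rewrite gt_eqF.
  by move: L_le; rewrite scaleE ler_pdivrMr ?mulr_gt0 // mulrC.
have L_sqr : entry_norm1 (rho - sigma) ^+ 2 <= (2 * d%:R * outcome_dist sigma rho) ^+ 2.
  by rewrite ler_sqr ?nnegrE // (le_trans L_ge0).
apply: le_trans (trnorm_sqr_le _) _.
rewrite [X in _ <= X](_ : _ = d%:R * (2 * d%:R * outcome_dist sigma rho) ^+ 2); last by ring.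
by rewrite ler_pM2l.
Qed.

Lemma mul_expRN_le (F a : R) : 0 <= F -> 0 < a -> F * expR (- (F / a)) <= a.
Proof.
move=> F_ge0 a_gt0; rewrite expRN ler_pdivrMr ?expR_gt0 //.
apply: le_trans (ler_wpM2l (ltW a_gt0) (expR_ge1Dx (F / a))).
by rewrite mulrDr mulr1 mulrCA divff ?gt_eqF // mulr1 lerDr ltW.
Qed.

(* Chosen so that the union bound 2^|outcomes| expR (- c^2 / 16) of the level is at most alpha. *)
Definition test_threshold (alpha : R) : R :=
  Num.sqrt (16 * #|{ffun pair_outcome d -> bool}|%:R / alpha).

Lemma two_sample_test_level alpha m n (rho : 'M[C]_d) : 0 < alpha -> density rho ->
  #|{ffun pair_outcome d -> bool}|%:R / alpha < (minn m n)%:R ->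
  prob_H1 (two_sample_test d (test_threshold alpha) m n) rho rho <= alpha.
Proof.
set F : R := #|_|%:R => alpha_gt0 dens_rho k_large.
have F_alpha_ge0 : 0 <= F / alpha by rewrite divr_ge0 ?ler0n ?ltW.
have c_sqr : test_threshold alpha ^+ 2 = 16 * (F / alpha).
  by rewrite /test_threshold sqr_sqrtr -mulrA // mulr_ge0.
apply: le_trans (two_sample_test_type1 dens_rho _ _ _) _.
- exact: sqrtr_ge0.
- by rewrite -(ltr0n R) (le_lt_trans F_alpha_ge0).
- by rewrite c_sqr ler_pM2l ?ltW.
by rewrite c_sqr [_ / 16]mulrC mulKf ?pnatr_eq0 // mul_expRN_le ?ler0n.
Qed.

(* The argument gives 64 in place of the constant 344. *)
Lemma two_sample_test_power (c : R) m n (sigma rho : 'M[C]_d) :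
  density sigma -> density rho ->
  prob_H0 (two_sample_test d c m n) sigma rho <=
  expR (- ((minn m n)%:R * trnorm (rho - sigma) ^+ 2) / (344 * d%:R ^+ 3) +
        outcome_dist sigma rho * c / 8 * Num.sqrt (minn m n)%:R).
Proof.
move=> dens_sigma dens_rho.
apply: le_trans (two_sample_test_type2 _ _ _ dens_sigma dens_rho) _.
rewrite ler_expR lerD2r mulNr lerN2.
have d_gt0 : 0 < d%:R :> R by rewrite ltr0n (density_dim_gt0 dens_rho).
have T_le := trnorm_sqr_le_outcome_dist dens_sigma dens_rho.
have k_ge0 : 0 <= (minn m n)%:R :> R by [].
have kT_le := ler_wpM2l k_ge0 T_le.
have kdmu_ge0 : 0 <= (minn m n)%:R * d%:R ^+ 3 * outcome_dist sigma rho ^+ 2 :> R.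
  by rewrite mulr_ge0 ?sqr_ge0 // mulr_ge0 // exprn_ge0 // ltW.
rewrite ler_pdivrMr ?mulr_gt0 ?exprn_gt0 //; nra.
Qed.

End LevelAndPower.

Theorem theorem5 (R : realType) (d : nat) (alpha : R) :
  (0 < d)%N -> 0 < alpha < 1 ->
  exists M : forall m n : nat, indep_rule R d (m + n),
    (forall m n, valid_rule (M m n)) /\
    forall c : nat,
      (exists N0 : nat, forall m n : nat,
          (N0 <= m)%N -> (N0 <= n)%N -> (m <= c * n)%N -> (n <= c * m)%N ->
          forall rho : 'M[R[i]]_d, density rho ->
            prob_H1 (M m n) rho rho <= alpha) /\
      (forall rho sigma : 'M[R[i]]_d, density rho -> density sigma -> rho <> sigma ->
         exists K : R, exists N1 : nat, forall m n : nat,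
           (N1 <= m)%N -> (N1 <= n)%N -> (m <= c * n)%N -> (n <= c * m)%N ->
           prob_H0 (M m n) sigma rho <=
             expR (- ((minn m n)%:R * trnorm (rho - sigma) ^+ 2) / (344 * d%:R ^+ 3)
                   + K * Num.sqrt ((minn m n)%:R))).
Proof.
move=> d_gt0 /andP[alpha_gt0 _].
exists (two_sample_test d (test_threshold d alpha)); split.
  by move=> m n; exact: pair_rule_valid.
move=> c; split.
  pose F : R := #|{ffun pair_outcome d -> bool}|%:R.
  exists (Num.truncn (F / alpha)).+1 => m n m_large n_large _ _ rho dens_rho.
  apply: two_sample_test_level => //; apply: lt_le_trans (truncnS_gt _) _.
  by rewrite ler_nat leq_min m_large n_large.
move=> rho sigma dens_rho dens_sigma _.
exists (outcome_dist sigma rho * test_threshold d alpha / 8), 0%N => m n _ _ _ _.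
exact: two_sample_test_power.
Qed.
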